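(* Let $\mathcal{G}$ be any Fischer space, let $\ell=\{a,b,c\}$ be a line of $\mathcal{G}$ and let $\mathcal{P}_0$ be the set of points not on $\ell$ and not collinear with any of $a,b,c$. If $v,w\in\mathcal{P}_0$ with $v\sim w$, then $v\wedge w\in\mathcal{P}_0$.
   Context: A 3-transposition group is a pair $(G,D)$ where $D$ is a conjugacy class of involutions generating $G$ with $de$ of order at most $3$ for all $d,e\in D$. Its Fischer space has point set $D$ and as lines the $3$-subsets consisting of the three involutions of a subgroup isomorphic to $\mathrm{Sym}(3)$. Distinct points on a common line are collinear ($p\sim q$), and $p\wedge q$ is the third point of that line. *)

From mathcomp Require Import all_boot all_fingroup.
Set Implicit Arguments. Unset Strict Implicit. Unset Printing Implicit Defensive.

Record group_str (T : Type) := GroupStr {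
  gmul : T -> T -> T;
  gone : T;
  ginv : T -> T;
  gmulA : forall x y z, gmul x (gmul y z) = gmul (gmul x y) z;
  gmul1 : forall x, gmul gone x = x;
  gmulV : forall x, gmul (ginv x) x = gone }.

Definition gexp (T : Type) (G : group_str T) (x : T) (n : nat) : T :=
  iter n (gmul G x) (gone G).

Inductive generated (T : Type) (G : group_str T) (D : T -> Prop) : T -> Prop :=
  | gen_in x : D x -> generated G D x
  | gen_one : generated G D (gone G)
  | gen_mul x y : generated G D x -> generated G D y -> generated G D (gmul G x y)
  | gen_inv x : generated G D x -> generated G D (ginv G x).

Definition three_transposition_group (T : Type) (G : group_str T) (D : T -> Prop) :=
  [/\ exists d0, forall x, D x <-> exists g, x = gmul G (gmul G (ginv G g) d0) g,
      forall d, D d -> d <> gone G /\ gmul G d d = gone G,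
      forall x, generated G D x
    & forall d e, D d -> D e ->
        exists k, [/\ 1 <= k, k <= 3 & gexp G (gmul G d e) k = gone G]].

(* {a,b,c} is a line of the Fischer space: a 3-subset of D consisting of the
   three involutions of a subgroup isomorphic to Sym(3), i.e. the image of an
   injective homomorphism f : Sym(3) -> G. *)
Definition fischer_line (T : Type) (G : group_str T) (D : T -> Prop) (a b c : T) :=
  [/\ D a, D b, D c, [/\ a <> b, a <> c & b <> c] &
      exists f : {perm 'I_3} -> T,
        [/\ injective f,
            forall s t, f (s * t)%g = gmul G (f s) (f t)
          & forall x, (x = a \/ x = b \/ x = c) <->
              exists s : {perm 'I_3}, [/\ s != 1%g, (s * s)%g = 1%g & x = f s]]].

Definition collinear (T : Type) (G : group_str T) (D : T -> Prop) (p q : T) :=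
  p <> q /\ exists r, fischer_line G D p q r.

Definition P0 (T : Type) (G : group_str T) (D : T -> Prop) (a b c x : T) :=
  [/\ D x, [/\ x <> a, x <> b & x <> c] &
      [/\ ~ collinear G D x a, ~ collinear G D x b & ~ collinear G D x c]].

From mathcomp Require Import all_boot all_fingroup.
From Stdlib Require Import Classical.
Set Implicit Arguments. Unset Strict Implicit. Unset Printing Implicit Defensive.

(* Two points d, e of a 3-transposition group are collinear exactly when they
   do not commute: if de has order 3 then ded = ede, and d, e generate a copy
   of Sym(3) whose involutions are d, e, ede; conversely the third point of a
   line {p, q, r} is pqp, so p and q cannot commute.  Hence v and w commute
   with a, b and c, so does the third point vwv of their line, and therefore
   vwv is collinear with none of them.  Nor is it on the line {a, b, c}, since
   vwv = a would make v collinear with a. *)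

Definition i0 : 'I_3 := @Ordinal 3 0 isT.
Definition i1 : 'I_3 := @Ordinal 3 1 isT.
Definition i2 : 'I_3 := @Ordinal 3 2 isT.

Lemma tperm_neq1 (X : finType) (x y : X) : x != y -> tperm x y != 1%g.
Proof. by move=> xy; apply/eqP => t1; have := odd_tperm x y; rewrite t1 odd_perm1 xy. Qed.

(* A permutation of 'I_3 is determined by the images of 0 and 1; composition
   is computable on these codes, which turns identities in Sym(3) into finite
   case analyses. *)
Definition sym3_code (s : {perm 'I_3}) : nat * nat := (s i0 : nat, s i1 : nat).

Definition sym3_apply (c : nat * nat) (i : nat) : nat :=
  if i == 0 then c.1 else if i == 1 then c.2 else 3 - c.1 - c.2.

Lemma sym3_codeE (s : {perm 'I_3}) (i : 'I_3) : s i = sym3_apply (sym3_code s) i :> nat.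
Proof.
have s_neq x y : x != y -> s x != s y by rewrite (inj_eq perm_inj).
case: i => [[|[|[|n]]] lt_i3] //; rewrite /sym3_apply /sym3_code /=.
- by congr (nat_of_ord (s _)); apply: val_inj.
- by congr (nat_of_ord (s _)); apply: val_inj.
have -> : Ordinal lt_i3 = i2 by apply: val_inj.
move: (s_neq i0 i1 isT) (s_neq i0 i2 isT) (s_neq i1 i2 isT).
by case: (s i0) => [[|[|[|?]]] ?] //; case: (s i1) => [[|[|[|?]]] ?] //;
  case: (s i2) => [[|[|[|?]]] ?].
Qed.

Lemma sym3_code_inj : injective sym3_code.
Proof. by move=> s t st; apply/permP => i; apply: val_inj; rewrite /= !sym3_codeE st. Qed.

Definition sym3_cmul (c c' : nat * nat) : nat * nat :=
  (sym3_apply c' (sym3_apply c 0), sym3_apply c' (sym3_apply c 1)).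

Lemma sym3_codeM (s t : {perm 'I_3}) :
  sym3_code (s * t)%g = sym3_cmul (sym3_code s) (sym3_code t).
Proof. by rewrite /sym3_code /sym3_cmul !permM !sym3_codeE. Qed.

Lemma sym3_code1 : sym3_code 1%g = (0, 1).
Proof. by rewrite /sym3_code !perm1. Qed.

Lemma sym3_code_cases (s : {perm 'I_3}) :
  let c := sym3_code s in
  c = (0, 1) \/ c = (1, 0) \/ c = (0, 2) \/ c = (2, 1) \/ c = (2, 0) \/ c = (1, 2).
Proof.
have : s i0 != s i1 by rewrite (inj_eq perm_inj).
rewrite /sym3_code.
by case: (s i0) => [[|[|[|?]]] ?] //; case: (s i1) => [[|[|[|?]]] ?] //= _; tauto.
Qed.

Lemma sym3_involution_code (s : {perm 'I_3}) :
  s != 1%g -> (s * s)%g = 1%g ->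
  let c := sym3_code s in c = (1, 0) \/ c = (0, 2) \/ c = (2, 1).
Proof.
move=> /eqP s_neq1 /(congr1 sym3_code); rewrite sym3_codeM sym3_code1.
have : sym3_code s <> (0, 1) by rewrite -sym3_code1 => /sym3_code_inj.
by case: (sym3_code_cases s) => [|[|[|[|[|]]]]] ->; auto.
Qed.

Lemma sym3_involution_conj (s1 s2 s3 : {perm 'I_3}) :
  s1 != 1%g -> (s1 * s1)%g = 1%g -> s2 != 1%g -> (s2 * s2)%g = 1%g ->
  s3 != 1%g -> (s3 * s3)%g = 1%g ->
  s1 != s2 -> s1 != s3 -> s2 != s3 -> s3 = (s1 * s2 * s1)%g.
Proof.
move=> + + + + + + /eqP s12 /eqP s13 /eqP s23.
move=> /sym3_involution_code/[apply] c1 /sym3_involution_code/[apply] c2.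
move=> /sym3_involution_code/[apply] c3; apply: sym3_code_inj; rewrite !sym3_codeM.
have [c12 c13 c23] : [/\ sym3_code s1 <> sym3_code s2, sym3_code s1 <> sym3_code s3
                      & sym3_code s2 <> sym3_code s3] by split=> /sym3_code_inj.
move: c12 c13 c23.
by case: c1 => [|[|]] ->; case: c2 => [|[|]] ->; case: c3 => [|[|]] ->.
Qed.

Section GroupStr.

Variables (T : Type) (G : group_str T).

Lemma gmulxV x : gmul G x (ginv G x) = gone G.
Proof.
rewrite -[gmul G x _](gmul1 G) -{1}(gmulV G (ginv G x)).
by rewrite -gmulA (gmulA G (ginv G x) x) (gmulV G) (gmul1 G) (gmulV G).
Qed.

Lemma gmulx1 x : gmul G x (gone G) = x.
Proof. by rewrite -(gmulV G x) gmulA gmulxV gmul1. Qed.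

Lemma ginv_uniq x y : gmul G x y = gone G -> ginv G x = y.
Proof. by move=> xy1; rewrite -[ginv G x]gmulx1 -xy1 gmulA gmulV gmul1. Qed.

Lemma ginvM x y : ginv G (gmul G x y) = gmul G (ginv G y) (ginv G x).
Proof. by apply: ginv_uniq; rewrite -gmulA (gmulA G y) gmulxV gmul1 gmulxV. Qed.

Lemma gmulI x y z : gmul G x y = gmul G x z -> y = z.
Proof. by move=> /(congr1 (gmul G (ginv G x))); rewrite !gmulA gmulV !gmul1. Qed.

Lemma gidem_eq1 x : gmul G x x = x -> x = gone G.
Proof. by rewrite -{3}[x]gmulx1; apply: gmulI. Qed.

Lemma ginv_involution x : gmul G x x = gone G -> ginv G x = x.
Proof. exact: ginv_uniq. Qed.

Lemma gmul_involutionK x y : gmul G x x = gone G -> gmul G x (gmul G x y) = y.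
Proof. by move=> xx1; rewrite gmulA xx1 gmul1. Qed.

End GroupStr.

Arguments ginv_uniq {T G x y}.
Arguments gmulI {T G x y z}.

Section Homomorphism.

Variables (aT : finGroupType) (T : Type) (G : group_str T) (f : aT -> T).
Hypothesis fM : forall s t, f (s * t)%g = gmul G (f s) (f t).

Lemma hom1 : f 1%g = gone G.
Proof. by apply: gidem_eq1; rewrite -fM mulg1. Qed.

Lemma homV s : f s^-1%g = ginv G (f s).
Proof. by apply/esym/ginv_uniq; rewrite -fM mulgV hom1. Qed.

Lemma hom_inj_ker1 : (forall s, f s = gone G -> s = 1%g) -> injective f.
Proof.
move=> ker1 s t fst; apply/eqP; rewrite eq_mulgV1; apply/eqP/ker1.
by rewrite fM homV fst gmulxV.
Qed.

End Homomorphism.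

Section FischerLines.

Variables (T : Type) (G : group_str T) (D : T -> Prop).

Lemma fischer_line_sym23 p q r : fischer_line G D p q r -> fischer_line G D p r q.
Proof.
case=> Dp Dq Dr [pq pr qr] [f [f_inj fM f_inv]]; split=> //.
  by split=> // rq; apply: qr.
by exists f; split=> // x; have := f_inv x; tauto.
Qed.

Lemma fischer_line_relations p q r :
  fischer_line G D p q r ->
  [/\ gmul G p p = gone G & r = gmul G p (gmul G q p)].
Proof.
case=> _ _ _ [pq pr qr] [f [f_inj fM f_inv]].
have [s1 [s1_neq1 s1s1 p_def]] := (f_inv p).1 (or_introl erefl).
have [s2 [s2_neq1 s2s2 q_def]] := (f_inv q).1 (or_intror (or_introl erefl)).
have [s3 [s3_neq1 s3s3 r_def]] := (f_inv r).1 (or_intror (or_intror erefl)).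
subst p q r.
split; first by rewrite -fM s1s1 (hom1 fM).
have neq s t : f s <> f t -> s != t by move=> fst; apply/eqP => st; apply: fst; rewrite st.
by rewrite (sym3_involution_conj s1_neq1 s1s1 s2_neq1 s2s2 s3_neq1 s3s3 (neq _ _ pq)
              (neq _ _ pr) (neq _ _ qr)) !fM gmulA.
Qed.

Lemma fischer_line_noncommuting p q r :
  fischer_line G D p q r -> gmul G p q <> gmul G q p.
Proof.
move=> L pq_qp; have [pp1 r_pqp] := fischer_line_relations L.
case: L => _ _ _ [_ _ qr] _.
by apply: qr; rewrite r_pqp -pq_qp gmul_involutionK.
Qed.

End FischerLines.

Section BraidLine.

Variables (T : Type) (G : group_str T) (D : T -> Prop) (d e : T).
Hypotheses (Dd : D d) (De : D e) (Dede : D (gmul G e (gmul G d e))).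
Hypotheses (dd1 : gmul G d d = gone G) (ee1 : gmul G e e = gone G).
Hypothesis de_neq_ed : gmul G d e <> gmul G e d.
Hypothesis braid : gmul G d (gmul G e d) = gmul G e (gmul G d e).

(* (0 1) |-> d, (1 2) |-> e, (0 2) |-> ede; recall that (s * t) x = t (s x). *)
Definition sym3_word (c : nat * nat) : T :=
  match c with
  | (1, 0) => d
  | (0, 2) => e
  | (2, 1) => gmul G e (gmul G d e)
  | (2, 0) => gmul G d e
  | (1, 2) => gmul G e d
  | _ => gone G
  end.

Let braid_line (s : {perm 'I_3}) : T := sym3_word (sym3_code s).

Let d_neq_e : d <> e.
Proof. by move=> de; apply: de_neq_ed; rewrite de. Qed.

Let dK x : gmul G d (gmul G d x) = x. Proof. exact: gmul_involutionK. Qed.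
Let eK x : gmul G e (gmul G e x) = x. Proof. exact: gmul_involutionK. Qed.
Let braidK x : gmul G d (gmul G e (gmul G d x)) = gmul G e (gmul G d (gmul G e x)).
Proof. by rewrite (gmulA G e) (gmulA G d) braid -!gmulA. Qed.

Local Ltac word_simpl :=
  repeat progress rewrite ?gmul1 ?gmulx1 -?gmulA ?dd1 ?ee1 ?dK ?eK ?braid ?braidK.

Let braid_lineM s t : braid_line (s * t)%g = gmul G (braid_line s) (braid_line t).
Proof.
rewrite /braid_line sym3_codeM.
by case: (sym3_code_cases s) => [|[|[|[|[|]]]]] ->;
  case: (sym3_code_cases t) => [|[|[|[|[|]]]]] -> /=; word_simpl.
Qed.

Let braid_line_ker1 s : braid_line s = gone G -> s = 1%g.
Proof.
have d_neq1 : d <> gone G by move=> d1; apply: de_neq_ed; rewrite d1 gmul1 gmulx1.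
have e_neq1 : e <> gone G by move=> e1; apply: de_neq_ed; rewrite e1 gmul1 gmulx1.
rewrite /braid_line; case: (sym3_code_cases s) => [|[|[|[|[|]]]]] cs; rewrite cs /=.
- by rewrite -sym3_code1 in cs => _; apply: sym3_code_inj.
- by move/d_neq1.
- by move/e_neq1.
- rewrite -ee1 => /gmulI de_e; case: d_neq1.
  by rewrite -[d](gmulx1 G) -ee1 gmulA de_e.
- by move=> de1; case: d_neq_e; rewrite -(ginv_uniq de1) ginv_involution.
- by move=> ed1; case: d_neq_e; rewrite -(ginv_uniq ed1) ginv_involution.
Qed.

Lemma fischer_line_braid : fischer_line G D d e (gmul G e (gmul G d e)).
Proof.
split=> //.
  split=> // [d_ede | e_ede].
  - by apply: de_neq_ed; rewrite {2}d_ede eK.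
  - have de1 : gmul G d e = gone G by apply/esym/(@gmulI _ G e); rewrite gmulx1.
    by apply: d_neq_e; rewrite -(ginv_uniq de1) ginv_involution.
exists braid_line; split; first exact: hom_inj_ker1 braid_lineM braid_line_ker1.
  exact: braid_lineM.
move=> x; split.
- case=> [->|[->|->]]; [exists (tperm i0 i1) | exists (tperm i1 i2) | exists (tperm i0 i2)];
    (split; [exact: tperm_neq1 | exact: tperm2 |
             by rewrite /braid_line /sym3_code tpermL ?tpermR ?tpermD]).
- case=> s [s_neq1 ss ->]; rewrite /braid_line.
  by case: (sym3_involution_code s_neq1 ss) => [|[|]] ->; auto.
Qed.

End BraidLine.

Section ThreeTranspositionGroup.

Variables (T : Type) (G : group_str T) (D : T -> Prop).
Hypothesis HG : three_transposition_group G D.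

Lemma transposition_involution d : D d -> gmul G d d = gone G.
Proof. by case: HG => _ invol _ _ /invol[]. Qed.

Lemma transposition_conj d e : D d -> D e -> D (gmul G e (gmul G d e)).
Proof.
case: HG => [[d0 Dclass] _ _ _] Dd De.
have [g ->] := (Dclass d).1 Dd.
apply/Dclass; exists (gmul G g e).
by rewrite ginvM (ginv_involution (transposition_involution De)) -!gmulA.
Qed.

Lemma transposition_commute_or_braid d e : D d -> D e ->
  gmul G d e = gmul G e d \/ gmul G d (gmul G e d) = gmul G e (gmul G d e).
Proof.
move=> Dd De; have dd1 := transposition_involution Dd.
have ee1 := transposition_involution De.
have ginv_de : ginv G (gmul G d e) = gmul G e d.
  by rewrite ginvM !ginv_involution.
case: HG => _ _ _ /(_ d e Dd De) [[|[|[|[|k]]]] []] // _ _; rewrite /gexp /= gmulx1.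
- by move=> /ginv_uniq; rewrite ginv_involution // => ->; left.
- by move=> /ginv_uniq; rewrite ginv_de => <-; left.
- move=> /ginv_uniq; rewrite ginv_de => ed_dede; right.
  by rewrite ed_dede -!gmulA gmul_involutionK.
Qed.

Lemma transposition_commute_or_collinear d e : D d -> D e ->
  gmul G d e = gmul G e d \/ collinear G D d e.
Proof.
move=> Dd De; case: (classic (gmul G d e = gmul G e d)) => [|de_neq_ed]; first by left.
right; split; first by move=> de; apply: de_neq_ed; rewrite de.
exists (gmul G e (gmul G d e)).
case: (transposition_commute_or_braid Dd De) => // braid.
exact: fischer_line_braid Dd De (transposition_conj Dd De)
  (transposition_involution Dd) (transposition_involution De) de_neq_ed braid.
Qed.

Lemma noncollinear_commute d e : D d -> D e -> ~ collinear G D d e ->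
  gmul G d e = gmul G e d.
Proof. by move=> Dd De; case: (transposition_commute_or_collinear Dd De). Qed.

Lemma fischer_line_third_noncollinear v w u a : D a -> fischer_line G D v w u ->
  ~ collinear G D v a -> ~ collinear G D w a -> u <> a /\ ~ collinear G D u a.
Proof.
move=> Da L va wa; have [_ u_vwv] := fischer_line_relations L.
case: (L) => Dv Dw _ [_ vu _] _; split.
  by move=> ua; apply: va; split; [rewrite -ua | exists w; rewrite -ua; apply: fischer_line_sym23].
have av := noncollinear_commute Dv Da va; have aw := noncollinear_commute Dw Da wa.
case=> _ [r Lua]; apply: (fischer_line_noncommuting Lua).
by rewrite u_vwv -!gmulA av (gmulA G w) aw -gmulA (gmulA G v) av -!gmulA.
Qed.

End ThreeTranspositionGroup.

Theorem proposition5p23 (T : Type) (G : group_str T) (D : T -> Prop)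
  (HG : three_transposition_group G D) (a b c : T)
  (Hl : fischer_line G D a b c) (v w : T)
  (Hv : P0 G D a b c v) (Hw : P0 G D a b c w) (Hvw : collinear G D v w) :
  forall u : T, fischer_line G D v w u -> P0 G D a b c u.
Proof.
(* Hvw is implied by the line L. *)
move=> u L; case: Hv => _ _ [va vb vc]; case: Hw => _ _ [wa wb wc].
case: Hl => Da Db Dc _ _.
have [ua nua] := fischer_line_third_noncollinear HG Da L va wa.
have [ub nub] := fischer_line_third_noncollinear HG Db L vb wb.
have [uc nuc] := fischer_line_third_noncollinear HG Dc L vc wc.
by case: L => _ _ Du _ _; split.
Qed.
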